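(* Let $k\ge 1$ be an integer, $w>0$ a real number, and $\alpha=1/(k+1)$. The solution $u(z)$ of the differential equation \[ u''(z) - 2u'(z) + \left(1 - w k z^{k-1}\right)u(z) = 0,\qquad u(0)=-1,\ u'(0)=0, \] is \[ u(z) = z e^z \sum_{m\ge 0} \left(\frac{wk}{(k+1)^2}\right)^m \frac{z^{(k+1)m}}{m!\,(m+\alpha)_m} \;-\; e^z \sum_{m\ge 0} \left(\frac{wk}{(k+1)^2}\right)^m \frac{z^{(k+1)m}}{m!\,(m-\alpha)_m}, \] where $(x)_m = x(x-1)\cdots(x-m+1)$ denotes the falling factorial (with $(x)_0=1$).
   Context: In the paper $w=w(t)=\ell(t)/k!$ for a plane binary tree $t$ with $k$ nodes and $\ell(t)$ increasing labelings; the function $u$ arises from the Riccati substitution $S_t=-u'/u$ for the generating function $S_t$ of plane increasing binary trees avoiding fringe subtree shape $t$. *)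

From Stdlib Require Import Reals Factorial.
From Coquelicot Require Import Coquelicot.
Open Scope R_scope.

Fixpoint falling (x : R) (m : nat) : R :=
  match m with
  | O => 1
  | S n => falling x n * (x - INR n)
  end.

Definition alpha (k : nat) : R := / (INR k + 1).

Definition ratio (k : nat) (w : R) : R := w * INR k / (INR k + 1) ^ 2.

Definition hyp_series (k : nat) (w s z : R) : R :=
  Series (fun m => ratio k w ^ m * z ^ ((k + 1) * m)
                   / (INR (Factorial.fact m) * falling (INR m + s) m)).

Definition u_sol (k : nat) (w z : R) : R :=
  z * exp z * hyp_series k w (alpha k) z
  - exp z * hyp_series k w (- alpha k) z.

From Stdlib Require Import Reals Factorial Lra Lia Psatz FunctionalExtensionality.
From Coquelicot Require Import Coquelicot.
Open Scope R_scope.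

(* Writing [u = exp z * v] turns the equation into [v'' = w k z^(k-1) v].  With
   [y = z^(k+1)] and [r = w k / (k+1)^2], the entire series
   [g_s(y) = sum_m r^m y^m / (m! (m+s)_m)] solves [y g'' + (1+s) g' = r g], because its
   coefficients satisfy [(m+1) (m+1+s) c_(m+1) = r c_m]; for [s = -alpha] the function
   [g_s(z^(k+1))], and for [s = alpha] the function [z g_s(z^(k+1))], then solves the
   equation for [v].  Uniqueness is an energy estimate: for the difference [d] of two
   solutions, [E = d^2 + d'^2] satisfies [|E'| <= L E] on bounded intervals, so
   [E exp(-L |z|)] cannot leave [E(0) = 0]. *)

Lemma falling_shift x n : falling x (S n) = x * falling (x - 1) n.
Proof.
  revert x; induction n as [|n IH]; intro x; [simpl; ring|].
  change (falling x (S (S n))) with (falling x (S n) * (x - INR (S n))).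
  rewrite IH; simpl (falling (x - 1) (S n)); rewrite S_INR; ring.
Qed.

Lemma falling_diag_S m s :
  falling (INR (S m) + s) (S m) = (INR m + 1 + s) * falling (INR m + s) m.
Proof.
  rewrite falling_shift, S_INR.
  replace (INR m + 1 + s - 1) with (INR m + s) by ring; reflexivity.
Qed.

Lemma falling_diag_gt0 m s : -1 < s -> 0 < falling (INR m + s) m.
Proof.
  intro Hs; induction m as [|m IH]; [simpl; lra|].
  rewrite falling_diag_S; pose proof (pos_INR m); apply Rmult_lt_0_compat; lra.
Qed.

Definition hyp_coef (r s : R) (m : nat) : R :=
  r ^ m / (INR (fact m) * falling (INR m + s) m).

Section HypergeometricSeries.

Variables r s : R.
Hypothesis r_neq0 : r <> 0.
Hypothesis s_gt_m1 : -1 < s.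

Lemma hyp_coef0 : hyp_coef r s 0 = 1.
Proof. unfold hyp_coef; simpl; field. Qed.

Lemma hyp_coef_neq0 m : hyp_coef r s m <> 0.
Proof.
  pose proof (falling_diag_gt0 m s s_gt_m1); pose proof (INR_fact_lt_0 m).
  unfold hyp_coef; apply Rmult_integral_contrapositive_currified.
  - exact (pow_nonzero _ _ r_neq0).
  - apply Rinv_neq_0_compat, Rgt_not_eq, Rmult_lt_0_compat; lra.
Qed.

Lemma hyp_coef_S m :
  hyp_coef r s (S m) = r * hyp_coef r s m / ((INR m + 1) * (INR m + 1 + s)).
Proof.
  pose proof (falling_diag_gt0 m s s_gt_m1); pose proof (INR_fact_lt_0 m); pose proof (pos_INR m).
  unfold hyp_coef; rewrite falling_diag_S, fact_simpl, mult_INR, S_INR; simpl pow.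
  field; repeat split; lra.
Qed.

Lemma hyp_coef_rec m :
  (INR m + 1) * (INR m + 1 + s) * hyp_coef r s (S m) = r * hyp_coef r s m.
Proof.
  pose proof (pos_INR m); rewrite hyp_coef_S; field; split; lra.
Qed.

Lemma CV_radius_hyp_coef : CV_radius (hyp_coef r s) = p_infty.
Proof.
  apply CV_radius_infinite_DAlembert; [exact hyp_coef_neq0|].
  apply is_lim_seq_ext with (fun n => Rabs r * / ((INR n + 1) * (INR n + 1 + s))).
  - intro n; pose proof (pos_INR n); pose proof (hyp_coef_neq0 n).
    rewrite hyp_coef_S, <- (Rabs_pos_eq (/ _)), <- Rabs_mult.
    + f_equal; field; repeat split; lra.
    + apply Rlt_le, Rinv_0_lt_compat, Rmult_lt_0_compat; lra.
  - replace (Finite 0) with (Rbar_mult (Rabs r) (Rbar_inv p_infty)) by (simpl; f_equal; ring).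
    apply is_lim_seq_scal_l, is_lim_seq_inv; [|discriminate].
    apply is_lim_seq_le_p_loc with INR; [|exact is_lim_seq_INR].
    exists 0%nat; intros n _; pose proof (pos_INR n); nra.
Qed.

Let c := hyp_coef r s.

Lemma hyp_inside y : Rbar_lt (Rabs y) (CV_radius c).
Proof. unfold c; rewrite CV_radius_hyp_coef; exact I. Qed.

Lemma is_derive_hyp y : is_derive (PSeries c) y (PSeries (PS_derive c) y).
Proof. exact (is_derive_PSeries _ _ (hyp_inside y)). Qed.

Lemma is_derive_hyp_derive y :
  is_derive (PSeries (PS_derive c)) y (PSeries (PS_derive (PS_derive c)) y).
Proof. apply is_derive_PSeries; rewrite CV_radius_derive; exact (hyp_inside y). Qed.

(* Coefficientwise this is the recursion [hyp_coef_rec]. *)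
Lemma hyp_ode y :
  y * PSeries (PS_derive (PS_derive c)) y + (1 + s) * PSeries (PS_derive c) y
  = r * PSeries c y.
Proof.
  rewrite <- PSeries_incr_1, <- PSeries_scal, <- PSeries_plus, <- PSeries_scal.
  - apply PSeries_ext; intros [|n];
      unfold PS_plus, PS_scal, PS_incr_1, PS_derive, c, plus, scal, zero; cbn -[INR];
      unfold mult; cbn -[INR]; rewrite <- hyp_coef_rec, ?(S_INR (S n)), ?S_INR, ?INR_0; ring.
  - apply ex_pseries_incr_1, ex_pseries_derive.
    rewrite CV_radius_derive; exact (hyp_inside y).
  - apply ex_pseries_scal; [exact (Rmult_comm _ _)|].
    exact (ex_pseries_derive _ _ (hyp_inside y)).
Qed.

End HypergeometricSeries.

Lemma is_derive_comp_pow k (f f' : R -> R) z :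
  (forall y, is_derive f y (f' y)) ->
  is_derive (fun x => f (x ^ (k + 1))) z ((INR k + 1) * z ^ k * f' (z ^ (k + 1))).
Proof.
  intro f_derive.
  replace ((INR k + 1) * z ^ k * f' (z ^ (k + 1)))
    with (scal (INR (k + 1) * 1 * z ^ Nat.pred (k + 1)) (f' (z ^ (k + 1)))).
  - exact (is_derive_comp _ _ _ _ _ (f_derive _) (is_derive_pow _ _ _ _ (is_derive_id z))).
  - rewrite Nat.add_1_r, S_INR; simpl Nat.pred; unfold scal; simpl; unfold mult; simpl; ring.
Qed.

Section PowerSubstitution.

Variables (k : nat) (r s : R) (g g' g'' : R -> R).
Hypothesis k_ge1 : (1 <= k)%nat.
Hypothesis g_derive : forall y, is_derive g y (g' y).
Hypothesis g'_derive : forall y, is_derive g' y (g'' y).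
Hypothesis g_ode : forall y, y * g'' y + (1 + s) * g' y = r * g y.

Definition sub_pow z := g (z ^ (k + 1)).
Definition sub_pow' z := (INR k + 1) * z ^ k * g' (z ^ (k + 1)).
Definition sub_pow'' z :=
  (INR k + 1) * z ^ (k - 1) *
  ((INR k - (INR k + 1) * (1 + s)) * g' (z ^ (k + 1)) + (INR k + 1) * r * g (z ^ (k + 1))).

Lemma is_derive_sub_pow z : is_derive sub_pow z (sub_pow' z).
Proof. exact (is_derive_comp_pow k g g' z g_derive). Qed.

Lemma is_derive_sub_pow' z : is_derive sub_pow' z (sub_pow'' z).
Proof.
  unfold sub_pow', sub_pow''; auto_derive.
  - exists (g'' (z ^ (k + 1))); apply g'_derive.
  - rewrite (is_derive_unique _ _ _ (g'_derive _)), plus_INR, INR_1.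
    replace (Nat.pred (k + 1)) with k by lia; replace (Nat.pred k) with (k - 1)%nat by lia.
    assert (ode := g_ode (z ^ (k + 1))).
    assert (pow_kk : z ^ k * z ^ k = z ^ (k - 1) * z ^ (k + 1))
      by (rewrite <- !pow_add; f_equal; lia).
    apply Rminus_diag_uniq.
    transitivity ((INR k + 1) ^ 2 * g'' (z ^ (k + 1))
                    * (z ^ k * z ^ k - z ^ (k - 1) * z ^ (k + 1))
      + (INR k + 1) ^ 2 * z ^ (k - 1) * (z ^ (k + 1) * g'' (z ^ (k + 1))
           + (1 + s) * g' (z ^ (k + 1)) - r * g (z ^ (k + 1)))); [ring|].
    rewrite pow_kk, ode; ring.
Qed.

End PowerSubstitution.

Lemma energy_vanishes_nonneg (E E' : R -> R) (L b : R) :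
  (forall x, is_derive E x (E' x)) -> (forall x, 0 <= E x) -> E 0 = 0 ->
  (forall x, Rabs x <= b -> E' x <= L * E x) -> 0 <= b -> E b = 0.
Proof.
  intros E_derive E_ge0 E0 E'_le b_ge0.
  set (F x := E x * exp (- L * x)).
  assert (F_derive : forall x, is_derive F x ((E' x - L * E x) * exp (- L * x))).
  { intro x; unfold F; auto_derive.
    - exists (E' x); apply E_derive.
    - rewrite (is_derive_unique (fun y : R => E y) x (E' x)) by apply E_derive; ring. }
  destruct (MVT_cor4 F _ 0 b (fun x _ => F_derive x) b) as [c [F_b c_le]];
    [rewrite Rminus_0_r, Rabs_pos_eq; lra|].
  rewrite !Rminus_0_r, (Rabs_pos_eq b) in * by lra.
  assert (F_b_le0 : F b <= 0).
  { assert (E'_c := E'_le c c_le); pose proof (exp_pos (- L * c)).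
    unfold F at 2 in F_b; rewrite E0, Rmult_0_l, Rminus_0_r in F_b; rewrite F_b.
    apply Rmult_le_0_r; [apply Rmult_le_0_r|]; lra. }
  pose proof (E_ge0 b); pose proof (exp_pos (- L * b)); unfold F in F_b_le0; nra.
Qed.

Lemma energy_vanishes (E E' : R -> R) :
  (forall x, is_derive E x (E' x)) -> (forall x, 0 <= E x) -> E 0 = 0 ->
  (forall M, exists L, forall x, Rabs x <= M -> Rabs (E' x) <= L * E x) ->
  forall z, E z = 0.
Proof.
  intros E_derive E_ge0 E0 E'_bound z.
  destruct (E'_bound (Rabs z)) as [L E'_le].
  destruct (Rle_lt_dec 0 z) as [z_ge0 | z_lt0].
  - apply (energy_vanishes_nonneg E E' L); auto.
    intros x x_le; apply Rle_trans with (Rabs (E' x)); [apply Rle_abs | apply E'_le].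
    rewrite (Rabs_pos_eq z); lra.
  - rewrite <- (Ropp_involutive z).
    apply (energy_vanishes_nonneg (fun x => E (- x)) (fun x => - E' (- x)) L); auto; try lra.
    + intro x; auto_derive.
      * exists (E' (- x)); apply E_derive.
      * rewrite (is_derive_unique (fun y : R => E y) (- x) (E' (- x))) by apply E_derive; ring.
    + rewrite Ropp_0; exact E0.
    + intros x x_le; apply Rle_trans with (Rabs (- E' (- x))); [apply Rle_abs|].
      rewrite Rabs_Ropp; apply E'_le; rewrite Rabs_Ropp, (Rabs_left z); lra.
Qed.

Lemma energy_derivative_bound (y y' b c C : R) :
  Rabs b <= C -> Rabs c <= C ->
  Rabs (2 * y * y' + 2 * y' * (b * y' + c * y)) <= (1 + 3 * C) * (y ^ 2 + y' ^ 2).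
Proof.
  intros b_le c_le.
  assert (yy'_le : Rabs (2 * y * y') <= y ^ 2 + y' ^ 2).
  { pose proof (pow2_ge_0 (y + y')); pose proof (pow2_ge_0 (y - y')).
    apply Rabs_le; split; nra. }
  assert (c_term : Rabs (2 * y * y' * (1 + c)) <= (y ^ 2 + y' ^ 2) * (1 + C)).
  { rewrite Rabs_mult; apply Rmult_le_compat; try apply Rabs_pos; [exact yy'_le|].
    eapply Rle_trans; [apply Rabs_triang|]; rewrite Rabs_R1; lra. }
  assert (b_term : Rabs (2 * b * y' ^ 2) <= 2 * C * (y ^ 2 + y' ^ 2)).
  { rewrite !Rabs_mult, (Rabs_pos_eq 2), (Rabs_pos_eq (y' ^ 2)) by nra.
    pose proof (Rabs_pos b); pose proof (pow2_ge_0 y); pose proof (pow2_ge_0 y'); nra. }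
  replace (2 * y * y' + 2 * y' * (b * y' + c * y))
    with (2 * y * y' * (1 + c) + 2 * b * y' ^ 2) by ring.
  eapply Rle_trans; [apply Rabs_triang | lra].
Qed.

Lemma linear_ode2_unique (y y' y'' b c : R -> R) :
  (forall x, is_derive y x (y' x)) -> (forall x, is_derive y' x (y'' x)) ->
  (forall x, y'' x = b x * y' x + c x * y x) ->
  (forall M, exists C, forall x, Rabs x <= M -> Rabs (b x) <= C /\ Rabs (c x) <= C) ->
  y 0 = 0 -> y' 0 = 0 -> forall x, y x = 0.
Proof.
  intros y_derive y'_derive ode coef_bound y0 y'0 x.
  set (E x := y x ^ 2 + y' x ^ 2).
  assert (E_zero : forall x, E x = 0).
  { apply (energy_vanishes E (fun x => 2 * y x * y' x + 2 * y' x * y'' x)).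
    - intro t; unfold E; auto_derive.
      + split; [exists (y' t); apply y_derive | split; [exists (y'' t); apply y'_derive | exact I]].
      + rewrite (is_derive_unique (fun u : R => y u) t (y' t)) by apply y_derive.
        rewrite (is_derive_unique (fun u : R => y' u) t (y'' t)) by apply y'_derive; ring.
    - intro t; unfold E; nra.
    - unfold E; rewrite y0, y'0; ring.
    - intro M; destruct (coef_bound M) as [C C_bound]; exists (1 + 3 * C).
      intros t t_le; destruct (C_bound t t_le) as [b_le c_le].
      rewrite ode; exact (energy_derivative_bound _ _ _ _ _ b_le c_le). }
  pose proof (E_zero x); unfold E in *; nra.
Qed.

Lemma is_derive_exp_mul (f : R -> R) z l :
  is_derive f z l -> is_derive (fun x => exp x * f x) z (exp z * (f z + l)).
Proof.
  intro f_derive; auto_derive.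
  - exists l; exact f_derive.
  - rewrite (is_derive_unique (fun y : R => f y) z l) by exact f_derive; ring.
Qed.

Lemma hyp_series_sub_pow k w s z :
  hyp_series k w s z = sub_pow k (PSeries (hyp_coef (ratio k w) s)) z.
Proof.
  unfold hyp_series, sub_pow, PSeries; apply Series_ext; intro m.
  unfold hyp_coef, scal; simpl; unfold mult; simpl; rewrite pow_mult; unfold Rdiv; ring.
Qed.

Section Solution.

Variables (k : nat) (w : R).
Hypothesis k_ge1 : (1 <= k)%nat.
Hypothesis w_gt0 : 0 < w.

Lemma INR_k_ge1 : 1 <= INR k.
Proof. exact (le_INR 1 k k_ge1). Qed.

Lemma ratio_neq0 : ratio k w <> 0.
Proof.
  pose proof INR_k_ge1; unfold ratio; apply Rgt_not_eq, Rdiv_lt_0_compat; nra.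
Qed.

Lemma alpha_bounds : 0 < alpha k < 1.
Proof.
  pose proof INR_k_ge1; unfold alpha; split.
  - apply Rinv_0_lt_compat; lra.
  - rewrite <- Rinv_1; apply Rinv_lt_contravar; lra.
Qed.

Definition hyp_fun s := PSeries (hyp_coef (ratio k w) s).
Definition hyp_fun' s := PSeries (PS_derive (hyp_coef (ratio k w) s)).
Definition hyp_fun'' s := PSeries (PS_derive (PS_derive (hyp_coef (ratio k w) s))).

Definition hyp_pow s := sub_pow k (hyp_fun s).
Definition hyp_pow' s := sub_pow' k (hyp_fun' s).
Definition hyp_pow'' s := sub_pow'' k (ratio k w) s (hyp_fun s) (hyp_fun' s).

Lemma is_derive_hyp_pow s z : -1 < s -> is_derive (hyp_pow s) z (hyp_pow' s z).
Proof.
  intro s_gt; apply is_derive_sub_pow; intro y; apply is_derive_hyp; auto using ratio_neq0.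
Qed.

Lemma is_derive_hyp_pow' s z : -1 < s -> is_derive (hyp_pow' s) z (hyp_pow'' s z).
Proof.
  intro s_gt; apply (is_derive_sub_pow' k (ratio k w) s _ _ (hyp_fun'' s)); auto.
  - intro y; apply is_derive_hyp_derive; auto using ratio_neq0.
  - intro y; apply hyp_ode; auto using ratio_neq0.
Qed.

Lemma Derive_hyp_pow s z : -1 < s -> Derive (fun y : R => hyp_pow s y) z = hyp_pow' s z.
Proof. intro s_gt; apply is_derive_unique, is_derive_hyp_pow, s_gt. Qed.

Lemma Derive_hyp_pow' s z : -1 < s -> Derive (fun y : R => hyp_pow' s y) z = hyp_pow'' s z.
Proof. intro s_gt; apply is_derive_unique, is_derive_hyp_pow', s_gt. Qed.

Definition v_sol z := z * hyp_pow (alpha k) z - hyp_pow (- alpha k) z.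
Definition v_sol' z :=
  hyp_pow (alpha k) z + z * hyp_pow' (alpha k) z - hyp_pow' (- alpha k) z.
Definition v_sol'' z :=
  2 * hyp_pow' (alpha k) z + z * hyp_pow'' (alpha k) z - hyp_pow'' (- alpha k) z.

Lemma is_derive_v_sol z : is_derive v_sol z (v_sol' z).
Proof.
  pose proof alpha_bounds; unfold v_sol, v_sol'; auto_derive.
  - split; [exists (hyp_pow' (alpha k) z) | split; [exists (hyp_pow' (- alpha k) z) | exact I]];
      apply is_derive_hyp_pow; lra.
  - rewrite !Derive_hyp_pow by lra; ring.
Qed.

Lemma is_derive_v_sol' z : is_derive v_sol' z (v_sol'' z).
Proof.
  pose proof alpha_bounds; unfold v_sol', v_sol''; auto_derive.
  - repeat split; try exact I;
      [exists (hyp_pow' (alpha k) z) | exists (hyp_pow'' (alpha k) z)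
      | exists (hyp_pow'' (- alpha k) z)];
      first [apply is_derive_hyp_pow | apply is_derive_hyp_pow']; lra.
  - rewrite Derive_hyp_pow, !Derive_hyp_pow' by lra; ring.
Qed.

(* The exponent [alpha k] is what makes the [hyp_fun'] terms cancel: the factor
   [INR k - (INR k + 1) * (1 + s)] of [sub_pow''] is [0] for [s = - alpha k] and
   [-2] for [s = alpha k], where it cancels the [2 * hyp_pow'] coming from [z * hyp_pow]. *)
Lemma v_sol''_eq z : v_sol'' z = w * INR k * z ^ (k - 1) * v_sol z.
Proof.
  pose proof INR_k_ge1.
  assert (pow_k : z ^ k = z * z ^ (k - 1)) by (replace k with (S (k - 1)) at 1 by lia; reflexivity).
  unfold v_sol'', v_sol, hyp_pow'', hyp_pow', hyp_pow, sub_pow'', sub_pow', sub_pow, ratio, alpha.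
  rewrite pow_k; field; lra.
Qed.

Definition u_sol' z := exp z * (v_sol z + v_sol' z).
Definition u_sol'' z := exp z * (v_sol z + 2 * v_sol' z + v_sol'' z).

Lemma u_sol_exp_v_sol z : u_sol k w z = exp z * v_sol z.
Proof. unfold u_sol, v_sol, hyp_pow, hyp_fun; rewrite !hyp_series_sub_pow; ring. Qed.

Lemma is_derive_u_sol z : is_derive (u_sol k w) z (u_sol' z).
Proof.
  apply (is_derive_ext (fun x => exp x * v_sol x)); [intro; symmetry; apply u_sol_exp_v_sol|].
  apply is_derive_exp_mul, is_derive_v_sol.
Qed.

Lemma is_derive_u_sol' z : is_derive u_sol' z (u_sol'' z).
Proof.
  unfold u_sol', u_sol''.
  replace (v_sol z + 2 * v_sol' z + v_sol'' z)
    with ((v_sol z + v_sol' z) + (v_sol' z + v_sol'' z)) by ring.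
  apply (is_derive_exp_mul (fun x => v_sol x + v_sol' x)), (is_derive_plus v_sol v_sol').
  - apply is_derive_v_sol.
  - apply is_derive_v_sol'.
Qed.

Lemma u_sol_ode z :
  u_sol'' z - 2 * u_sol' z + (1 - w * INR k * z ^ (k - 1)) * u_sol k w z = 0.
Proof. unfold u_sol'', u_sol'; rewrite u_sol_exp_v_sol, v_sol''_eq; ring. Qed.

Lemma hyp_pow_0 s : hyp_pow s 0 = 1.
Proof.
  unfold hyp_pow, sub_pow, hyp_fun; rewrite pow_i by lia; rewrite PSeries_0; apply hyp_coef0.
Qed.

Lemma hyp_pow'_0 s : hyp_pow' s 0 = 0.
Proof. unfold hyp_pow', sub_pow'; rewrite pow_i by lia; ring. Qed.

Lemma u_sol_0 : u_sol k w 0 = -1.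
Proof. rewrite u_sol_exp_v_sol; unfold v_sol; rewrite !hyp_pow_0, exp_0; ring. Qed.

Lemma u_sol'_0 : u_sol' 0 = 0.
Proof. unfold u_sol', v_sol, v_sol'; rewrite !hyp_pow_0, !hyp_pow'_0, exp_0; ring. Qed.

End Solution.

Lemma pow_coef_locally_bounded (a : R) (n : nat) M :
  exists C, forall x, Rabs x <= M -> Rabs 2 <= C /\ Rabs (a * x ^ n - 1) <= C.
Proof.
  exists (2 + Rabs a * Rabs M ^ n); intros x x_le.
  assert (pow_x_le : Rabs x ^ n <= Rabs M ^ n).
  { apply pow_incr; split; [apply Rabs_pos | eapply Rle_trans; [exact x_le | apply Rle_abs]]. }
  assert (a_pow_le : Rabs a * Rabs x ^ n <= Rabs a * Rabs M ^ n)
    by (apply Rmult_le_compat_l; [apply Rabs_pos | exact pow_x_le]).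
  pose proof (Rmult_le_pos _ _ (Rabs_pos a) (pow_le _ n (Rabs_pos x))).
  rewrite (Rabs_pos_eq 2) by lra; split; [lra|].
  unfold Rminus; eapply Rle_trans; [apply Rabs_triang|].
  rewrite Rabs_Ropp, Rabs_R1, Rabs_mult, <- RPow_abs; lra.
Qed.

Theorem lemma3p2 (k : nat) (w : R) (hk : (1 <= k)%nat) (hw : 0 < w) :
  (* u_sol is twice differentiable on R and solves the IVP *)
  (forall z, ex_derive (u_sol k w) z /\ ex_derive (Derive (u_sol k w)) z) /\
  (forall z, Derive (Derive (u_sol k w)) z - 2 * Derive (u_sol k w) z
             + (1 - w * INR k * z ^ (k - 1)) * u_sol k w z = 0) /\
  u_sol k w 0 = -1 /\ Derive (u_sol k w) 0 = 0 /\
  (* and it is the (unique) solution *)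
  (forall (v v' v'' : R -> R),
     (forall z, is_derive v z (v' z)) ->
     (forall z, is_derive v' z (v'' z)) ->
     (forall z, v'' z - 2 * v' z + (1 - w * INR k * z ^ (k - 1)) * v z = 0) ->
     v 0 = -1 -> v' 0 = 0 ->
     forall z, v z = u_sol k w z).
Proof.
  assert (Du : Derive (u_sol k w) = u_sol' k w).
  { apply functional_extensionality; intro; apply is_derive_unique, is_derive_u_sol; auto. }
  assert (Du' : Derive (u_sol' k w) = u_sol'' k w).
  { apply functional_extensionality; intro; apply is_derive_unique, is_derive_u_sol'; auto. }
  rewrite Du, Du'.
  split; [intro z; split; eexists; [apply is_derive_u_sol | apply is_derive_u_sol']; auto|].
  split; [intro z; apply u_sol_ode; auto|].
  split; [apply u_sol_0; auto|].
  split; [apply u_sol'_0; auto|].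
  intros v v' v'' v_derive v'_derive v_ode v_0 v'_0 z.
  apply Rminus_diag_uniq; revert z.
  apply (linear_ode2_unique _ (fun z => v' z - u_sol' k w z) (fun z => v'' z - u_sol'' k w z)
           (fun _ => 2) (fun z => w * INR k * z ^ (k - 1) - 1)).
  - intro z; exact (is_derive_minus _ _ z _ _ (v_derive z) (is_derive_u_sol k w hk hw z)).
  - intro z; exact (is_derive_minus _ _ z _ _ (v'_derive z) (is_derive_u_sol' k w hk hw z)).
  - intro z; pose proof (v_ode z); pose proof (u_sol_ode k w hk z); lra.
  - apply pow_coef_locally_bounded.
  - rewrite v_0, u_sol_0; auto; ring.
  - rewrite v'_0, u_sol'_0; auto; ring.
Qed.
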